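(* Let $n\geq 2$ and write $p_{n+1} = k_n d_n + r_n$ with integers $k_n\ge 0$ and $1\leq r_n < d_n$ (division of $p_{n+1}$ by $d_n$). Each of the following statements is equivalent to $d_n^2 < 2p_{n+1}$: 1. The number of odd positive integers $m\le p_n$ with $m\,p_{n+1} > p_n^2$ equals $d_n/2$; that is, the smallest odd multiple of $p_{n+1}$ greater than $p_n^2$ is $(p_n - (d_n-2))\,p_{n+1}$. 2. $(d_n-2)\,p_{n+1}$ is the largest even multiple of $p_{n+1}$ that is at most $d_n p_n$. 3. $k_n \geq d_n/2$.
   Context: $p_n$ denotes the $n$th prime ($p_1=2$) and $d_n := p_{n+1}-p_n$. *)

From mathcomp Require Import all_boot.
Set Implicit Arguments. Unset Strict Implicit. Unset Printing Implicit Defensive.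

Definition next_prime (m : nat) : nat :=
  ex_minn (let: exist2 p Hlt Hp := prime_above m in
           ex_intro (fun q => (m < q) && prime q) p (introT andP (conj Hlt Hp))).

(* p_ n = n-th prime, 1-indexed: p_ 1 = 2, p_ 2 = 3, ... (p_ 0 = 2 is junk) *)
Definition p_ (n : nat) : nat := iter n.-1 next_prime 2.

Definition d_ (n : nat) : nat := p_ n.+1 - p_ n.

(* Write Q = P + d with P, Q odd and d even.  The identity
   (P + 2 - d) Q = P^2 + (2Q - d^2) shows that P + 2 - d, the first odd number
   above P - d, has its multiple by Q above P^2 exactly when d^2 < 2Q; and since
   (P - d) Q = P^2 - d^2 < P^2, no smaller odd m qualifies.  Dually
   (d - 2) Q = d P + (d^2 - 2Q), and 2Q = d^2 is impossible modulo 4.  Finally,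
   if Q = k d + r with 0 < r < d, then 2Q - d^2 = 2 (k - d/2) d + 2r changes
   sign exactly at k = d/2. *)

From mathcomp Require Import all_boot zify.

Set Implicit Arguments.
Unset Strict Implicit.
Unset Printing Implicit Defensive.

Lemma next_primeP m : m < next_prime m /\ prime (next_prime m).
Proof. by rewrite /next_prime; case: ex_minnP => q /andP[]. Qed.

Lemma p_succ n : 0 < n -> p_ n.+1 = next_prime (p_ n).
Proof. by case: n. Qed.

Lemma p_prime n : prime (p_ n).
Proof.
case: n => [|n] //; elim: n => [|n IHn] //.
by rewrite p_succ //; case: (next_primeP (p_ n.+1)).
Qed.

Lemma p_lt_succ n : 0 < n -> p_ n < p_ n.+1.
Proof. by move=> n_gt0; rewrite p_succ //; case: (next_primeP (p_ n)). Qed.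

Lemma p_odd n : 2 <= n -> odd (p_ n).
Proof.
case: n => [|[|n]] // _.
have p2_lt := @p_lt_succ n.+1 isT.
have p1_gt1 := prime_gt1 (p_prime n.+1).
by case: (even_prime (p_prime n.+2)) => // p2E; rewrite p2E in p2_lt; lia.
Qed.

Lemma count_odd_geq c N :
  count (fun m => odd m && (c <= m)) (iota 0 N) = N %/ 2 - c %/ 2.
Proof.
elim: N => [|N IHN] //; rewrite -addn1 iotaD count_cat IHN /= addn0.
by have := modn2 N; case: (odd N) => /=; case: (leqP c N) => /=; lia.
Qed.

Lemma sq_lt_double_iff_half_le_div Q d k r :
  ~~ odd d -> Q = k * d + r -> 0 < r < d -> (d ^ 2 < 2 * Q) <-> (d %/ 2 <= k).
Proof.
move=> d_even QE /andP[r_gt0 r_lt_d]; have := modn2 d; rewrite (negbTE d_even).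
by split; nia.
Qed.

Section OddGap.

Variables P d : nat.
Hypotheses (P_odd : odd P) (d_even : ~~ odd d) (d_gt0 : 0 < d).

Local Notation Q := (P + d).

Lemma odd_mul_gt_sq_geq m : odd m -> P ^ 2 < m * Q -> P.+2 <= m + d.
Proof.
move=> m_odd lt_m.
have lt_md : P < m + d.
  by rewrite -(@ltn_pmul2r Q) ?addn_gt0 ?d_gt0 ?orbT //; nia.
have := modn2 d; have := modn2 m; have := modn2 P.
by rewrite m_odd P_odd (negbTE d_even); lia.
Qed.

Lemma sq_lt_mul_iff m : m + d = P.+2 -> (P ^ 2 < m * Q) = (d ^ 2 < 2 * Q).
Proof. by move=> mdE; apply/idP/idP; nia. Qed.

Lemma gap_le_of_sq_lt : d ^ 2 < 2 * Q -> d <= P.+2.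
Proof.
move=> lt_d; have := modn2 d; rewrite (negbTE d_even) => dmod.
by case: leqP => // gt_d; nia.
Qed.

Lemma sq_lt_mul_of_geq m :
  d ^ 2 < 2 * Q -> P.+2 <= m + d -> P ^ 2 < m * Q.
Proof.
move=> lt_d le_m; have le_d := gap_le_of_sq_lt lt_d.
have: P ^ 2 < (P.+2 - d) * Q by rewrite sq_lt_mul_iff //; lia.
by move/leq_trans; apply; apply: leq_mul => //; lia.
Qed.

Lemma count_odd_mul_gt_sq :
  d ^ 2 < 2 * Q <->
  count (fun m => odd m && (P ^ 2 < m * Q)) (iota 1 P) = d %/ 2.
Proof.
have := modn2 d; have := modn2 P; rewrite P_odd (negbTE d_even) => Pmod dmod.
have -> : count (fun m => odd m && (P ^ 2 < m * Q)) (iota 1 P) =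
          count (fun m => odd m && (P ^ 2 < m * Q)) (iota 0 P.+1) by [].
split=> [lt_d | cntE].
  rewrite (@eq_count _ _ (fun m => odd m && (P.+2 - d <= m))).
    by rewrite count_odd_geq; have := gap_le_of_sq_lt lt_d; lia.
  move=> m /=; case m_odd: (odd m) => //=.
  apply/idP/idP => [/(odd_mul_gt_sq_geq m_odd) | le_m]; first lia.
  by apply: sq_lt_mul_of_geq => //; lia.
apply/negPn/negP => not_lt_d.
suff: count (fun m => odd m && (P ^ 2 < m * Q)) (iota 0 P.+1)
        <= P.+1 %/ 2 - (P.+4 - d) %/ 2 by lia.
rewrite -count_odd_geq; apply: sub_count => m /= /andP[m_odd lt_m]; rewrite m_odd /=.
have := odd_mul_gt_sq_geq m_odd lt_m; rewrite leq_eqVlt => /orP[/eqP mdE | ].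
  by rewrite -(sq_lt_mul_iff (esym mdE)) lt_m in not_lt_d.
have := modn2 m; rewrite m_odd; lia.
Qed.

Lemma min_odd_mul_gt_sq :
  d ^ 2 < 2 * Q <->
  [/\ odd (P - (d - 2)), P ^ 2 < (P - (d - 2)) * Q &
      forall m, odd m -> P ^ 2 < m * Q -> (P - (d - 2)) * Q <= m * Q].
Proof.
have := modn2 d; rewrite (negbTE d_even) => dmod.
split=> [lt_d | [m0_odd lt_m0 _]].
  have le_d := gap_le_of_sq_lt lt_d.
  split.
  - by rewrite oddB ?P_odd ?oddB ?(negbTE d_even) //; lia.
  - by rewrite sq_lt_mul_iff //; lia.
  - move=> m m_odd /(odd_mul_gt_sq_geq m_odd) le_m.
    by apply: leq_mul => //; lia.
have le_d : d - 2 <= P by case: leqP m0_odd => // /ltnW; rewrite -subn_eq0 => /eqP ->.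
by rewrite sq_lt_mul_iff in lt_m0; lia.
Qed.

Lemma sub2_mul_le_iff : ((d - 2) * Q <= d * P) = (d ^ 2 < 2 * Q).
Proof.
have := modn2 d; have := modn2 P; rewrite P_odd (negbTE d_even) => Pmod dmod.
by apply/idP/idP; nia.
Qed.

Lemma max_even_mul_le :
  d ^ 2 < 2 * Q <->
  [/\ ~~ odd (d - 2), (d - 2) * Q <= d * P &
      forall m, ~~ odd m -> m * Q <= d * P -> m * Q <= (d - 2) * Q].
Proof.
rewrite sub2_mul_le_iff; have := modn2 d; rewrite (negbTE d_even) => dmod.
split=> [lt_d | []//]; split=> //.
  by rewrite oddB ?(negbTE d_even) //; lia.
move=> m m_even le_m; apply: leq_mul => //.
have m_lt_d : m < d by apply: contraTltn le_m => le_dm; nia.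
have := modn2 m; rewrite (negbTE m_even); lia.
Qed.

End OddGap.

Theorem theorem1p6 (n k r : nat) :
  2 <= n ->
  p_ n.+1 = k * d_ n + r -> 1 <= r < d_ n ->
  let P := p_ n in let Q := p_ n.+1 in let d := d_ n in
  (* 1 (count form) *)
  ((d ^ 2 < 2 * Q) <->
     count (fun m => odd m && (P ^ 2 < m * Q)) (iota 1 P) = d %/ 2) /\
  (* 1 (smallest odd multiple form) *)
  ((d ^ 2 < 2 * Q) <->
     [/\ odd (P - (d - 2)), P ^ 2 < (P - (d - 2)) * Q &
         forall m, odd m -> P ^ 2 < m * Q -> (P - (d - 2)) * Q <= m * Q]) /\
  (* 2 *)
  ((d ^ 2 < 2 * Q) <->
     [/\ ~~ odd (d - 2), (d - 2) * Q <= d * P &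
         forall m, ~~ odd m -> m * Q <= d * P -> m * Q <= (d - 2) * Q]) /\
  (* 3 *)
  ((d ^ 2 < 2 * Q) <-> d %/ 2 <= k).
Proof.
move=> n_ge2 QE r_bounds P Q d.
have P_lt_Q : P < Q by apply: p_lt_succ; lia.
have [P_odd Q_odd] : odd P /\ odd Q by split; apply: p_odd; lia.
have d_even : ~~ odd d by rewrite oddB ?P_odd ?Q_odd // ltnW.
have d_gt0 : 0 < d by rewrite subn_gt0.
have QPd : Q = P + d by rewrite subnKC // ltnW.
rewrite QPd; split; first exact: count_odd_mul_gt_sq.
split; first exact: min_odd_mul_gt_sq.
split; first exact: max_even_mul_le.
by apply: (sq_lt_double_iff_half_le_div d_even _ r_bounds); rewrite -QPd.
Qed.
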